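(* If $\mathbf A=\langle A,\vee,0,\mathscr F\rangle$ is a semilattice with operators, then $\operatorname{Con}\mathbf A\cong\operatorname{Don}\mathbf A\cong\operatorname{Eon}\mathbf A$.
   Context: A semilattice with operators is a join semilattice with least element $0$ together with a set $\mathscr F$ of unary maps each preserving $\vee$ and $0$. A relation on $A$ is compatible if it is compatible with $\vee$ and with every $f\in\mathscr F$. $\operatorname{Con}\mathbf A$ is the lattice of congruences. $\operatorname{Don}\mathbf A$ is the lattice (under inclusion) of all reflexive, transitive, compatible relations $R$ such that $x\ge y$ implies $x\,R\,y$. $\operatorname{Eon}\mathbf A$ is the lattice of all reflexive, transitive, compatible relations $R$ such that (1) $x\,R\,y$ implies $x\le y$, and (2) if $x\le y\le z$ and $x\,R\,z$ then $x\,R\,y$. *)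

Set Implicit Arguments.

Record is_semilattice_with_operators (A : Type) (join : A -> A -> A) (zero : A)
  (F : (A -> A) -> Prop) : Prop := {
  join_assoc : forall x y z, join x (join y z) = join (join x y) z;
  join_comm  : forall x y, join x y = join y x;
  join_idem  : forall x, join x x = x;
  join_zero  : forall x, join zero x = x;
  op_join    : forall f, F f -> forall x y, f (join x y) = join (f x) (f y);
  op_zero    : forall f, F f -> f zero = zero
}.

Section Defs.
Variables (A : Type) (join : A -> A -> A) (zero : A) (F : (A -> A) -> Prop).

Definition sle (x y : A) : Prop := join x y = y.

Definition relation := A -> A -> Prop.

Definition reflexive (R : relation) := forall x, R x x.
Definition symmetric (R : relation) := forall x y, R x y -> R y x.
Definition transitive (R : relation) := forall x y z, R x y -> R y z -> R x z.

Definition compatible (R : relation) : Prop :=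
  (forall x y x' y', R x y -> R x' y' -> R (join x x') (join y y')) /\
  (forall f, F f -> forall x y, R x y -> R (f x) (f y)).

Definition is_con (R : relation) : Prop :=
  reflexive R /\ symmetric R /\ transitive R /\ compatible R.

Definition is_don (R : relation) : Prop :=
  reflexive R /\ transitive R /\ compatible R /\
  (forall x y, sle y x -> R x y).

Definition is_eon (R : relation) : Prop :=
  reflexive R /\ transitive R /\ compatible R /\
  (forall x y, R x y -> sle x y) /\
  (forall x y z, sle x y -> sle y z -> R x z -> R x y).

End Defs.

Definition rsub (A : Type) (R S : relation A) : Prop := forall x y, R x y -> S x y.

(* Order (= lattice) isomorphism between the families of relations P and Q,
   each ordered by inclusion. *)
Definition order_iso (A : Type) (P Q : relation A -> Prop) : Prop :=
  exists (phi psi : relation A -> relation A),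
    (forall R, P R -> Q (phi R)) /\
    (forall S, Q S -> P (psi S)) /\
    (forall R, P R -> psi (phi R) = R) /\
    (forall S, Q S -> phi (psi S) = S) /\
    (forall R R', P R -> P R' -> (rsub R R' <-> rsub (phi R) (phi R'))).

(** Both isomorphisms are given by the same construction
    [R |-> up R], where [up R x y] means [x R (x \/ y)], with inverses
    [D |-> D ∩ D^-1] (from Don to Con) and [E |-> E ∩ (<=)] (from Eon to Don).
    All four maps are monotone, so it suffices that they are mutually inverse
    and preserve the three classes.  The only delicate point is transitivity
    of [up R]: from [x R (x \/ y)] and [y R (y \/ z)] one gets
    [x R (x \/ y \/ z)], and one must come back down to [x \/ z]; for a
    congruence this uses symmetry, for a member of Eon it uses convexity. *)

From Stdlib Require Import FunctionalExtensionality PropExtensionality.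

Set Implicit Arguments.
Unset Strict Implicit.

Lemma relation_ext (A : Type) (R S : relation A) :
  (forall x y, R x y <-> S x y) -> R = S.
Proof.
  intro H. apply functional_extensionality; intro x.
  apply functional_extensionality; intro y.
  apply propositional_extensionality, H.
Qed.

Lemma order_iso_of_monotone_inverses (A : Type) (P Q : relation A -> Prop)
  (phi psi : relation A -> relation A) :
  (forall R, P R -> Q (phi R)) ->
  (forall S, Q S -> P (psi S)) ->
  (forall R, P R -> psi (phi R) = R) ->
  (forall S, Q S -> phi (psi S) = S) ->
  (forall R R', rsub R R' -> rsub (phi R) (phi R')) ->
  (forall S S', rsub S S' -> rsub (psi S) (psi S')) ->
  order_iso P Q.
Proof.
  intros HPQ HQP Hpsiphi Hphipsi Hphi Hpsi.
  exists phi, psi. repeat split; auto.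
  intros Hsub. rewrite <- (Hpsiphi R), <- (Hpsiphi R'); auto.
Qed.

Section SemilatticeWithOperators.
Variables (A : Type) (j : A -> A -> A) (zero : A) (F : (A -> A) -> Prop).
Hypothesis HA : is_semilattice_with_operators j zero F.

Let jA := join_assoc HA.
Let jC := join_comm HA.
Let jI := join_idem HA.

Lemma sle_joinl x y : sle j x (j x y).
Proof. unfold sle. rewrite jA, jI. reflexivity. Qed.

Lemma sle_joinr x y : sle j y (j x y).
Proof. rewrite jC. apply sle_joinl. Qed.

Lemma join_sle x y z : sle j x z -> sle j y z -> sle j (j x y) z.
Proof. unfold sle; intros Hx Hy. rewrite <- jA, Hy, Hx. reflexivity. Qed.

Lemma sle_join_eq x y : sle j y x -> j x y = x.
Proof. unfold sle; intro H. rewrite jC. exact H. Qed.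

Lemma joinACA x y x' y' : j (j x x') (j y y') = j (j x y) (j x' y').
Proof. rewrite <- !jA. f_equal. rewrite !jA. f_equal. apply jC. Qed.

Lemma compatible_joinl (R : relation A) :
  reflexive R -> compatible j F R -> forall c a b, R a b -> R (j c a) (j c b).
Proof. intros Hr [Hc _] c a b H. apply Hc; auto. Qed.

Definition up (R : relation A) : relation A := fun x y => R x (j x y).
Definition sym_core (R : relation A) : relation A := fun x y => R x y /\ R y x.
Definition le_part (R : relation A) : relation A := fun x y => R x y /\ sle j x y.

Lemma up_monotone R R' : rsub R R' -> rsub (up R) (up R').
Proof. intros H x y. apply H. Qed.

Lemma sym_core_monotone R R' : rsub R R' -> rsub (sym_core R) (sym_core R').
Proof. intros H x y [? ?]; split; apply H; assumption. Qed.

Lemma le_part_monotone R R' : rsub R R' -> rsub (le_part R) (le_part R').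
Proof. intros H x y [? ?]; split; auto. Qed.

Lemma up_reflexive R : reflexive R -> reflexive (up R).
Proof. intros Hr x. unfold up. rewrite jI. apply Hr. Qed.

Lemma up_of_sle R : reflexive R -> forall x y, sle j y x -> up R x y.
Proof. intros Hr x y H. unfold up. rewrite sle_join_eq by exact H. apply Hr. Qed.

Lemma up_compatible R : compatible j F R -> compatible j F (up R).
Proof.
  intros [Hj Hf]. unfold up. split.
  - intros x y x' y' H H'. rewrite joinACA. apply Hj; assumption.
  - intros f Hfun x y H. rewrite <- (op_join HA _ Hfun). apply Hf; assumption.
Qed.

Lemma up_trans_join R : reflexive R -> transitive R -> compatible j F R ->
  forall x y z, up R x y -> up R y z -> R x (j x (j y z)).
Proof.
  intros Hr Ht Hc x y z Hxy Hyz. apply Ht with (j x y); [exact Hxy |].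
  rewrite jA. pose proof (compatible_joinl Hr Hc x Hyz) as H.
  rewrite jA in H. exact H.
Qed.

Lemma up_don_of_con R : is_con j F R -> is_don j F (up R).
Proof.
  intros [Hr [Hs [Ht Hc]]]. split; [| split; [| split]].
  - apply up_reflexive, Hr.
  - intros x y z Hxy Hyz.
    assert (Hxyz := up_trans_join Hr Ht Hc Hxy Hyz).
    (* joining with z and using symmetry brings x \/ y \/ z back to x \/ z *)
    assert (Hz := compatible_joinl Hr Hc z Hxyz).
    replace (j z (j x (j y z))) with (j x (j y z)) in Hz
      by (rewrite (jC z), <- !jA, jI; reflexivity).
    rewrite (jC z x) in Hz. apply Ht with (j x (j y z)); auto.
  - apply up_compatible, Hc.
  - apply up_of_sle, Hr.
Qed.

Lemma up_don_of_eon R : is_eon j F R -> is_don j F (up R).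
Proof.
  intros [Hr [Ht [Hc [_ Hconv]]]]. split; [| split; [| split]].
  - apply up_reflexive, Hr.
  - intros x y z Hxy Hyz.
    apply Hconv with (j x (j y z)); [apply sle_joinl | |].
    + apply join_sle; [apply sle_joinl |]. rewrite jA. apply sle_joinr.
    + exact (up_trans_join Hr Ht Hc Hxy Hyz).
  - apply up_compatible, Hc.
  - apply up_of_sle, Hr.
Qed.

Lemma con_sym_core R : is_don j F R -> is_con j F (sym_core R).
Proof.
  intros [Hr [Ht [[Hj Hf] _]]]. unfold sym_core. split; [| split; [| split; [| split]]].
  - intro; split; apply Hr.
  - intros x y [? ?]; split; assumption.
  - intros x y z [? ?] [? ?]; split; eauto.
  - intros x y x' y' [? ?] [? ?]; split; apply Hj; assumption.
  - intros f Hfun x y [? ?]; split; apply Hf; assumption.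
Qed.

Lemma eon_le_part R : is_don j F R -> is_eon j F (le_part R).
Proof.
  intros [Hr [Ht [[Hj Hf] Hge]]]. unfold le_part.
  split; [| split; [| split; [split | split]]].
  - intro x; split; [apply Hr | apply jI].
  - intros x y z [Hxy Hxy'] [Hyz Hyz']; split; eauto.
    unfold sle in *. rewrite <- Hyz', jA, Hxy'. reflexivity.
  - intros x y x' y' [H Hle] [H' Hle']; split; [apply Hj; assumption |].
    unfold sle in *. rewrite joinACA, Hle, Hle'. reflexivity.
  - intros f Hfun x y [H Hle]; split; [apply Hf; assumption |].
    unfold sle in *. rewrite <- (op_join HA _ Hfun), Hle. reflexivity.
  - intros x y [_ ?]; assumption.
  - intros x y z Hxy Hyz [Hxz _]. split; [| exact Hxy].
    apply Ht with z; [exact Hxz |]. apply Hge, Hyz.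
Qed.

Lemma don_iff_up R : is_don j F R -> forall x y, R x y <-> up R x y.
Proof.
  intros [Hr [Ht [[Hj _] Hge]]] x y. unfold up. split; intro H.
  - rewrite <- (jI x) at 1. apply Hj; [apply Hr | exact H].
  - apply Ht with (j x y); [exact H |]. apply Hge, sle_joinr.
Qed.

Lemma sym_core_up R : is_con j F R -> sym_core (up R) = R.
Proof.
  intros [Hr [Hs [Ht Hc]]]. apply relation_ext; intros x y. unfold sym_core, up.
  split.
  - intros [Hxy Hyx]. rewrite jC in Hyx. eauto.
  - intro H. split.
    + rewrite <- (jI x) at 1. apply compatible_joinl; auto.
    + rewrite <- (jI y) at 1. apply compatible_joinl; auto.
Qed.

Lemma up_sym_core R : is_don j F R -> up (sym_core R) = R.
Proof.
  intros HR. apply relation_ext; intros x y. rewrite (don_iff_up HR).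
  unfold up, sym_core. split; [intros [H _]; exact H | intro H; split; [exact H |]].
  destruct HR as [_ [_ [_ Hge]]]. apply Hge, sle_joinl.
Qed.

Lemma le_part_up R : is_eon j F R -> le_part (up R) = R.
Proof.
  intros [_ [_ [_ [Hle _]]]]. apply relation_ext; intros x y. unfold le_part, up.
  split.
  - intros [H Hxy]. unfold sle in Hxy. rewrite Hxy in H. exact H.
  - intro H. pose proof (Hle x y H) as Hxy. split; [| exact Hxy].
    unfold sle in Hxy. rewrite Hxy. exact H.
Qed.

Lemma up_le_part R : is_don j F R -> up (le_part R) = R.
Proof.
  intros HR. apply relation_ext; intros x y. rewrite (don_iff_up HR).
  unfold up, le_part. split; [intros [H _]; exact H | intro H; split; [exact H |]].
  apply sle_joinl.
Qed.

End SemilatticeWithOperators.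

Theorem lemma3p4 (A : Type) (join : A -> A -> A) (zero : A)
  (F : (A -> A) -> Prop)
  (HA : is_semilattice_with_operators join zero F) :
  order_iso (is_con join F) (is_don join F) /\
  order_iso (is_don join F) (is_eon join F).
Proof.
  split.
  - apply (@order_iso_of_monotone_inverses A _ _ (up join) (@sym_core A)).
    + intros R HR. exact (up_don_of_con HA HR).
    + intros R HR. exact (con_sym_core HR).
    + intros R HR. exact (sym_core_up HA HR).
    + intros R HR. exact (up_sym_core HA HR).
    + apply up_monotone.
    + apply sym_core_monotone.
  - apply (@order_iso_of_monotone_inverses A _ _ (le_part join) (up join)).
    + intros R HR. exact (eon_le_part HA HR).
    + intros R HR. exact (up_don_of_eon HA HR).
    + intros R HR. exact (up_le_part HA HR).
    + intros R HR. exact (le_part_up HR).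
    + apply le_part_monotone.
    + apply up_monotone.
Qed.
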